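(* Let $\mathcal M=(R,D,C)$ be a $\lambda\mu$-model in the category of $\omega$-algebraic lattices. If $\Gamma\vdash T:\sigma\mid\Delta$ is derivable in the intersection type assignment system, then $\models_{\mathcal M}\Gamma\vdash T:\sigma\mid\Delta$, for any term or command $T$.
   Context: $\lambda\mu$ terms and commands: $M::=x\mid\lambda x.M\mid MN\mid\mu\alpha.\mathsf C$ and $\mathsf C::=[\alpha]M$. $\lambda\mu$-model. In the category of $\omega$-algebraic lattices (Scott-continuous maps), $(R,D,C)$ is a $\lambda\mu$-model if $D=[C\to R]$ and $C=D\times C$ (up to isomorphism). Environments $e$ map term variables into $D$ and names into $C$. The interpretation is: - $[\![x]\!]e\,k=e(x)k$; - $[\![\lambda x.M]\!]e\langle d,k'\rangle=[\![M]\!](e[x\to d])k'$; - $[\![MN]\!]e\,k=[\![M]\!]e\langle[\![N]\!]e,k\rangle$; - $[\![\mu\alpha.\mathsf C]\!]e\,k=d\,k'$, where $\langle d,k'\rangle=[\![\mathsf C]\!](e[\alpha\to k])$; - $[\![[\alpha]M]\!]e=\langle[\![M]\!]e,e(\alpha)\rangle\in C$. Types. With $\mathcal K(R)$ the compact elements of $R$: - $\Lambda_R$: $\rho::=\psi_a\mid\omega\mid\rho\wedge\rho$ ($a\in\mathcal K(R)$). - $\Lambda_D$: $\delta::=\rho\mid\kappa\to\rho\mid\omega\mid\delta\wedge\delta$. - $\Lambda_C$: $\kappa::=\delta\times\kappa\mid\omega\mid\kappa\wedge\kappa$. The relations $\le_R,\le_D,\le_C$ are the least reflexive, transitive relations with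 $\sigma\wedge\tau\le\sigma,\tau$, $\sigma\le\omega$, $\rho\le\sigma,\tau\Rightarrow\rho\le\sigma\wedge\tau$, and additionally: - $\psi_\bot\sim\omega$ and $\psi_{a\sqcup b}\sim\psi_a\wedge\psi_b$; - if $\rho_1\le_R\rho_2$ then $\rho_1\le_D\rho_2$; - $\omega\le_D\omega\to\omega$; - $\psi_a\le_D\omega\to\psi_a\le_D\psi_a$; - $\omega\le_C\omega\times\omega$; - $(\kappa\to\rho_1)\wedge(\kappa\to\rho_2)\le_D\kappa\to(\rho_1\wedge\rho_2)$; - $(\delta_1\times\kappa_1)\wedge(\delta_2\times\kappa_2)\le_C(\delta_1\wedge\delta_2)\times(\kappa_1\wedge\kappa_2)$; - $\to$ is contravariant in $\Lambda_C$ and covariant in $\Lambda_R$; - $\times$ is covariant in both arguments. Type assignment. A basis $\Gamma$ is a finite map from variables to $\Lambda_D$, and a context $\Delta$ is a finite map from names to $\Lambda_C$. $\Gamma(x)$ and $\Delta(\alpha)$ are $\omega$ outside the domain. The rules are: - (Ax) $\Gamma,x{:}\delta\vdash x:\delta\mid\Delta$. - (Abs) From $\Gamma\vdash M:\kappa\to\rho\mid\Delta$, $\Gamma(x)=\delta$, infer $\Gamma\setminus x\vdash\lambda x.M:(\delta\times\kappa)\to\rho\mid\Delta$. - (App) From $\Gamma\vdash M:(\delta\times\kappa)\to\rho\mid\Delta$ and $\Gamma\vdash N:\delta\mid\Delta$, infer $\Gamma\vdash MN:\kappa\to\rho\mid\Delta$. - (Cmd) From $\Gamma\vdash M:\delta\mid\Delta$,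 $\Delta(\alpha)=\kappa$, infer $\Gamma\vdash[\alpha]M:\delta\times\kappa\mid\Delta$. - ($\mu$) From $\Gamma\vdash\mathsf C:(\kappa'\to\rho)\times\kappa'\mid\Delta$, $\Delta(\alpha)=\kappa$, infer $\Gamma\vdash\mu\alpha.\mathsf C:\kappa\to\rho\mid\Delta\setminus\alpha$. - ($\wedge$), ($\omega$) (every $T$ gets $\omega$), and ($\le$) (subsumption via $\le_D$ or $\le_C$). Type interpretation in $\mathcal M$: - $[\![\psi_a]\!]^R=\{r\in R\mid a\sqsubseteq r\}$; - $[\![\delta\times\kappa]\!]^C=[\![\delta]\!]^D\times[\![\kappa]\!]^C$; - $[\![\kappa\to\rho]\!]^D=\{d\in D\mid\forall k\in[\![\kappa]\!]^C:\ d\,k\in[\![\rho]\!]^R\}$; - $[\![\psi_a]\!]^D=\{d\in D\mid\forall k\in C:\ d\,k\in[\![\psi_a]\!]^R\}$; - $[\![\omega]\!]^A=A$ and $[\![\sigma\wedge\tau]\!]^A=[\![\sigma]\!]^A\cap[\![\tau]\!]^A$. Satisfiability: - $e\models\Gamma;\Delta$ iff $e(x)\in[\![\Gamma(x)]\!]^D$ for all $x$ and $e(\alpha)\in[\![\Delta(\alpha)]\!]^C$ for all $\alpha$; - $\models_{\mathcal M}\Gamma\vdash M:\delta\mid\Delta$ iff for all $e$ with $e\models\Gamma;\Delta$, $[\![M]\!]e\in[\![\delta]\!]^D$; - likewise for commands, with $[\![\mathsf C]\!]e\in[\![\kappa]\!]^C$. *)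

From Stdlib Require Import List.
Set Implicit Arguments.
Unset Strict Implicit.

Record CLat := {
  car :> Type;
  le : car -> car -> Prop;
  le_refl : forall x, le x x;
  le_trans : forall x y z, le x y -> le y z -> le x z;
  le_antisym : forall x y, le x y -> le y x -> x = y;
  sup : (car -> Prop) -> car;
  sup_ub : forall (S : car -> Prop) x, S x -> le x (sup S);
  sup_least : forall (S : car -> Prop) y, (forall x, S x -> le x y) -> le (sup S) y
}.
Arguments le {c} _ _.
Arguments sup {c} _.

Definition bot (L : CLat) : L := sup (fun _ : L => False).
Definition join (L : CLat) (x y : L) : L := sup (fun z => z = x \/ z = y).

Definition directed (L : CLat) (S : L -> Prop) : Prop :=
  (exists x, S x) /\
  (forall x y, S x -> S y -> exists z, S z /\ le x z /\ le y z).

Definition compact (L : CLat) (a : L) : Prop :=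
  forall S : L -> Prop, directed S -> le a (sup S) -> exists s, S s /\ le a s.

Definition omega_algebraic (L : CLat) : Prop :=
  (exists en : nat -> L, forall a, compact a -> exists n, en n = a) /\
  (forall x : L, x = sup (fun a => compact a /\ le a x)).

Definition scott (L L' : CLat) (f : L -> L') : Prop :=
  forall S : L -> Prop, directed S ->
    f (sup S) = sup (fun y => exists s, S s /\ y = f s).

(* D ~= [C -> R] (Scott-continuous maps, pointwise order) via app / lam,
   C ~= D x C via pair / pr1 / pr2; both are order isomorphisms. *)
Record lm_model := {
  R : CLat; D : CLat; C : CLat;
  R_alg : omega_algebraic R;
  D_alg : omega_algebraic D;
  C_alg : omega_algebraic C;
  app : D -> C -> R;
  lam : (C -> R) -> D;
  app_scott : forall d, scott (app d);
  lam_app : forall d, lam (app d) = d;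
  app_lam : forall f : C -> R, scott f -> app (lam f) = f;
  app_le : forall d d', le d d' <-> (forall k, le (app d k) (app d' k));
  pair : D -> C -> C;
  pr1 : C -> D;
  pr2 : C -> C;
  pr1_pair : forall d k, pr1 (pair d k) = d;
  pr2_pair : forall d k, pr2 (pair d k) = k;
  pair_pr : forall k, pair (pr1 k) (pr2 k) = k;
  pair_le : forall k k', le k k' <-> (le (pr1 k) (pr1 k') /\ le (pr2 k) (pr2 k'))
}.

Inductive term : Type :=
| Var : nat -> term
| Lam : nat -> term -> term
| App : term -> term -> term
| Mu  : nat -> cmd -> term
with cmd : Type :=
| Cm : nat -> term -> cmd.   (* Cm a M = [a]M *)

Definition upd {A : Type} (f : nat -> A) (x : nat) (v : A) : nat -> A :=
  fun y => if Nat.eqb y x then v else f y.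

Definition env (M : lm_model) : Type := ((nat -> D M) * (nat -> C M))%type.

Fixpoint iT (M : lm_model) (t : term) (e : env M) {struct t} : D M :=
  match t with
  | Var x => fst e x
  | Lam x u => lam (fun k => app (iT u (upd (fst e) x (pr1 k), snd e)) (pr2 k))
  | App u v => lam (fun k => app (iT u e) (pair (iT v e) k))
  | Mu a c => lam (fun k =>
      let p := iC c (fst e, upd (snd e) a k) in app (pr1 p) (pr2 p))
  end
with iC (M : lm_model) (c : cmd) (e : env M) {struct c} : C M :=
  match c with
  | Cm a u => pair (iT u e) (snd e a)
  end.

Definition KR (L : CLat) := { a : L | compact a }.

Inductive rtype (L : CLat) : Type :=
| Psi : KR L -> rtype L
| OmR : rtype L
| AndR : rtype L -> rtype L -> rtype L.

Inductive dtype (L : CLat) : Type :=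
| DR : rtype L -> dtype L
| Arr : ctype L -> rtype L -> dtype L
| OmD : dtype L
| AndD : dtype L -> dtype L -> dtype L
with ctype (L : CLat) : Type :=
| Prod : dtype L -> ctype L -> ctype L
| OmC : ctype L
| AndC : ctype L -> ctype L -> ctype L.

Arguments OmR {L}. Arguments OmD {L}. Arguments OmC {L}.

Inductive leR (L : CLat) : rtype L -> rtype L -> Prop :=
| leR_refl s : leR s s
| leR_trans s t u : leR s t -> leR t u -> leR s u
| leR_andl s t : leR (AndR s t) s
| leR_andr s t : leR (AndR s t) t
| leR_om s : leR s OmR
| leR_glb r s t : leR r s -> leR r t -> leR r (AndR s t)
| leR_bot1 (a : KR L) : proj1_sig a = bot L -> leR (Psi a) OmR
| leR_bot2 (a : KR L) : proj1_sig a = bot L -> leR OmR (Psi a)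
| leR_join1 (a b c : KR L) : proj1_sig c = join (proj1_sig a) (proj1_sig b) ->
    leR (Psi c) (AndR (Psi a) (Psi b))
| leR_join2 (a b c : KR L) : proj1_sig c = join (proj1_sig a) (proj1_sig b) ->
    leR (AndR (Psi a) (Psi b)) (Psi c).

Inductive leD (L : CLat) : dtype L -> dtype L -> Prop :=
| leD_refl s : leD s s
| leD_trans s t u : leD s t -> leD t u -> leD s u
| leD_andl s t : leD (AndD s t) s
| leD_andr s t : leD (AndD s t) t
| leD_om s : leD s OmD
| leD_glb r s t : leD r s -> leD r t -> leD r (AndD s t)
| leD_R r1 r2 : leR r1 r2 -> leD (DR r1) (DR r2)
| leD_omarr : leD OmD (Arr OmC OmR)
| leD_psi1 (a : KR L) : leD (DR (Psi a)) (Arr OmC (Psi a))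
| leD_psi2 (a : KR L) : leD (Arr OmC (Psi a)) (DR (Psi a))
| leD_arrand k r1 r2 : leD (AndD (Arr k r1) (Arr k r2)) (Arr k (AndR r1 r2))
| leD_arr k1 k2 r1 r2 : leC k2 k1 -> leR r1 r2 -> leD (Arr k1 r1) (Arr k2 r2)
with leC (L : CLat) : ctype L -> ctype L -> Prop :=
| leC_refl s : leC s s
| leC_trans s t u : leC s t -> leC t u -> leC s u
| leC_andl s t : leC (AndC s t) s
| leC_andr s t : leC (AndC s t) t
| leC_om s : leC s OmC
| leC_glb r s t : leC r s -> leC r t -> leC r (AndC s t)
| leC_omprod : leC OmC (Prod OmD OmC)
| leC_prodand d1 d2 k1 k2 :
    leC (AndC (Prod d1 k1) (Prod d2 k2)) (Prod (AndD d1 d2) (AndC k1 k2))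
| leC_prod d1 d2 k1 k2 : leD d1 d2 -> leC k1 k2 -> leC (Prod d1 k1) (Prod d2 k2).

(* Bases / contexts are total maps, equal to omega outside their (finite) domain *)
Definition basis (L : CLat) := nat -> dtype L.
Definition context (L : CLat) := nat -> ctype L.

Definition finite_basis (L : CLat) (G : basis L) : Prop :=
  exists l : list nat, forall x, ~ In x l -> G x = OmD.
Definition finite_context (L : CLat) (Dl : context L) : Prop :=
  exists l : list nat, forall a, ~ In a l -> Dl a = OmC.

Inductive typT (L : CLat) : basis L -> term -> dtype L -> context L -> Prop :=
| tAx G Dl x : typT G (Var x) (G x) Dl
| tAbs G Dl x u k r : typT G u (Arr k r) Dl ->
    typT (upd G x OmD) (Lam x u) (Arr (Prod (G x) k) r) Dl
| tApp G Dl u v d k r : typT G u (Arr (Prod d k) r) Dl -> typT G v d Dl ->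
    typT G (App u v) (Arr k r) Dl
| tMu G Dl a c k' r : typC G c (Prod (Arr k' r) k') Dl ->
    typT G (Mu a c) (Arr (Dl a) r) (upd Dl a OmC)
| tAnd G Dl u s t : typT G u s Dl -> typT G u t Dl -> typT G u (AndD s t) Dl
| tOm G Dl u : typT G u OmD Dl
| tLe G Dl u s t : typT G u s Dl -> leD s t -> typT G u t Dl
with typC (L : CLat) : basis L -> cmd -> ctype L -> context L -> Prop :=
| cCmd G Dl a u d : typT G u d Dl -> typC G (Cm a u) (Prod d (Dl a)) Dl
| cAnd G Dl c s t : typC G c s Dl -> typC G c t Dl -> typC G c (AndC s t) Dl
| cOm G Dl c : typC G c OmC Dl
| cLe G Dl c s t : typC G c s Dl -> leC s t -> typC G c t Dl.

Fixpoint interpR (L : CLat) (r : rtype L) : L -> Prop :=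
  match r with
  | Psi a => fun x => le (proj1_sig a) x
  | OmR => fun _ => True
  | AndR s t => fun x => interpR s x /\ interpR t x
  end.

(* interpretation in D of a type rho of Lambda_R seen in Lambda_D *)
Fixpoint interpRD (M : lm_model) (r : rtype (R M)) : D M -> Prop :=
  match r with
  | Psi a => fun d => forall k : C M, interpR (Psi a) (app d k)
  | OmR => fun _ => True
  | AndR s t => fun d => interpRD s d /\ interpRD t d
  end.

Fixpoint interpD (M : lm_model) (s : dtype (R M)) {struct s} : D M -> Prop :=
  match s with
  | DR r => interpRD r
  | Arr k r => fun d => forall c : C M, interpC k c -> interpR r (app d c)
  | OmD => fun _ => True
  | AndD s t => fun d => interpD s d /\ interpD t d
  end
with interpC (M : lm_model) (k : ctype (R M)) {struct k} : C M -> Prop :=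
  match k with
  | Prod d k => fun c => interpD d (pr1 c) /\ interpC k (pr2 c)
  | OmC => fun _ => True
  | AndC s t => fun c => interpC s c /\ interpC t c
  end.

Definition sat (M : lm_model) (e : env M) (G : basis (R M)) (Dl : context (R M)) : Prop :=
  (forall x, interpD (G x) (fst e x)) /\ (forall a, interpC (Dl a) (snd e a)).

Definition modelsT (M : lm_model) (G : basis (R M)) (t : term) (s : dtype (R M))
  (Dl : context (R M)) : Prop :=
  forall e : env M, sat e G Dl -> interpD s (iT t e).

Definition modelsC (M : lm_model) (G : basis (R M)) (c : cmd) (k : ctype (R M))
  (Dl : context (R M)) : Prop :=
  forall e : env M, sat e G Dl -> interpC k (iC c e).

(** Soundness is proved by induction on derivations, after checking that
    subtyping is sound by a separate induction.  The only delicate point is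
    that the meanings of abstraction, application and [mu] are built with
    [lam], and [app (lam f) = f] holds only for Scott-continuous [f]; so one
    first shows that the interpretation of terms and commands is
    Scott-continuous in the environment.  Because [lam] occurs under binders,
    this is proved for environments depending continuously on a parameter
    ranging over an arbitrary complete lattice. *)

From Stdlib Require Import PeanoNat.
Set Implicit Arguments.
Unset Strict Implicit.

Notation img f S := (fun y => exists s, S s /\ y = f s).

Lemma sup_ext (L : CLat) (S T : L -> Prop) :
  (forall x, S x <-> T x) -> sup S = sup T.
Proof.
  intros H; apply le_antisym; apply sup_least; intros x Hx; apply sup_ub, H; exact Hx.
Qed.

Lemma sup_image_id (L : CLat) (S : L -> Prop) : sup (img (fun x => x) S) = sup S.
Proof.
  apply sup_ext; intros x; split; [intros [s [Hs ->]]; exact Hs | intros Hx; exists x; auto].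
Qed.

Lemma sup_image_comp (L1 L2 L3 : CLat) (f : L1 -> L2) (g : L2 -> L3) (S : L1 -> Prop) :
  sup (img g (img f S)) = sup (img (fun x => g (f x)) S).
Proof.
  apply sup_ext; intros y; split.
  - intros [w [[s [Hs ->]] ->]]; exists s; auto.
  - intros [s [Hs ->]]; exists (f s); split; [exists s; auto | reflexivity].
Qed.

Lemma sup_image_ext (L L' : CLat) (f g : L -> L') (S : L -> Prop) :
  (forall x, f x = g x) -> sup (img f S) = sup (img g S).
Proof.
  intros H; apply sup_ext; intros y; split; intros [s [Hs ->]]; exists s; rewrite H; auto.
Qed.

Lemma scott_monotone (L L' : CLat) (f : L -> L') :
  scott f -> forall x y, le x y -> le (f x) (f y).
Proof.
  intros Hf x y Hxy.
  set (S := fun z : L => z = x \/ z = y).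
  assert (HS : directed S).
  { split; [exists x; left; reflexivity |].
    intros a b Ha Hb; exists y; split; [right; reflexivity |].
    destruct Ha as [-> | ->], Hb as [-> | ->]; split; auto using le_refl. }
  assert (Hsup : sup S = y).
  { apply le_antisym.
    - apply sup_least; intros z [-> | ->]; auto using le_refl.
    - apply sup_ub; right; reflexivity. }
  rewrite <- Hsup, (Hf S HS).
  apply sup_ub; exists x; split; [left |]; reflexivity.
Qed.

Lemma directed_image (L L' : CLat) (f : L -> L') (S : L -> Prop) :
  (forall x y, le x y -> le (f x) (f y)) -> directed S -> directed (img f S).
Proof.
  intros Hf [[x Hx] HS]; split; [exists (f x), x; auto |].
  intros a b [s [Hs ->]] [t [Ht ->]].
  destruct (HS s t Hs Ht) as [u [Hu [Hsu Htu]]].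
  exists (f u); split; [exists u; auto | split; apply Hf; assumption].
Qed.

Lemma scott_const (L L' : CLat) (c : L') : scott (fun _ : L => c).
Proof.
  intros S [[x Hx] _]; apply le_antisym.
  - apply sup_ub; exists x; auto.
  - apply sup_least; intros y [s [_ ->]]; apply le_refl.
Qed.

Lemma scott_id (L : CLat) : scott (fun x : L => x).
Proof. intros S _; symmetry; apply sup_image_id. Qed.

Lemma scott_comp (L1 L2 L3 : CLat) (f : L1 -> L2) (g : L2 -> L3) :
  scott f -> scott g -> scott (fun x => g (f x)).
Proof.
  intros Hf Hg S HS.
  rewrite (Hf S HS), (Hg _ (directed_image (scott_monotone Hf) HS)).
  apply sup_image_comp.
Qed.

Lemma scott_sup_pointwise (I : Type) (L L' : CLat) (f : I -> L -> L') (S : I -> Prop) :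
  (forall i, S i -> scott (f i)) -> scott (fun x => sup (img (fun i => f i x) S)).
Proof.
  intros Hf K HK; apply le_antisym.
  - apply sup_least; intros y [i [Hi ->]]; rewrite (Hf i Hi K HK).
    apply sup_least; intros y [k [Hk ->]].
    apply le_trans with (sup (img (fun i => f i k) S)).
    + apply sup_ub; exists i; auto.
    + apply sup_ub with (S := img (fun x => sup (img (fun i => f i x) S)) K); exists k; auto.
  - apply sup_least; intros y [k [Hk ->]]; apply sup_least; intros y [i [Hi ->]].
    apply le_trans with (f i (sup K)).
    + apply (scott_monotone (Hf i Hi)), sup_ub, Hk.
    + apply sup_ub with (S := img (fun i => f i (sup K)) S); exists i; auto.
Qed.

Section ModelContinuity.

Variable M : lm_model.

Lemma sup_pair (S : C M -> Prop) :
  sup S = pair (sup (img (@pr1 M) S)) (sup (img (@pr2 M) S)).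
Proof.
  apply le_antisym.
  - apply sup_least; intros s Hs; apply pair_le; rewrite pr1_pair, pr2_pair.
    split; apply sup_ub; exists s; auto.
  - apply pair_le; rewrite pr1_pair, pr2_pair.
    split; apply sup_least; intros y [s [Hs ->]];
      apply (pair_le s (sup S)), sup_ub, Hs.
Qed.

Lemma scott_pr1 : scott (@pr1 M).
Proof. intros S _; rewrite sup_pair, pr1_pair; reflexivity. Qed.

Lemma scott_pr2 : scott (@pr2 M).
Proof. intros S _; rewrite sup_pair, pr2_pair; reflexivity. Qed.

Lemma scott_pair (P : CLat) (g : P -> D M) (h : P -> C M) :
  scott g -> scott h -> scott (fun p => pair (g p) (h p)).
Proof.
  intros Hg Hh S HS.
  rewrite sup_pair, !sup_image_comp, (Hg S HS), (Hh S HS).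
  f_equal; apply sup_image_ext; intros p; symmetry; [apply pr1_pair | apply pr2_pair].
Qed.

Lemma app_sup (S : D M -> Prop) (k : C M) :
  app (sup S) k = sup (img (fun d => app d k) S).
Proof.
  set (G := fun k => sup (img (fun d => app d k) S)).
  assert (HG : scott G) by (apply scott_sup_pointwise; intros d _; apply app_scott).
  enough (E : sup S = lam G) by (rewrite E, (app_lam HG); reflexivity).
  apply le_antisym.
  - apply sup_least; intros d Hd; apply app_le; intros k0; rewrite (app_lam HG).
    apply sup_ub; exists d; auto.
  - apply app_le; intros k0; rewrite (app_lam HG).
    apply sup_least; intros y [d [Hd ->]]; apply (app_le d (sup S)), sup_ub, Hd.
Qed.

Lemma scott_app (P : CLat) (g : P -> D M) (h : P -> C M) :
  scott g -> scott h -> scott (fun p => app (g p) (h p)).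
Proof.
  intros Hg Hh S HS; apply le_antisym.
  - rewrite (Hg S HS), app_sup; apply sup_least; intros y [d [[s [Hs ->]] ->]].
    rewrite (Hh S HS), (app_scott (g s) (directed_image (scott_monotone Hh) HS)).
    apply sup_least; intros y [c [[t [Ht ->]] ->]].
    destruct (proj2 HS s t Hs Ht) as [u [Hu [Hsu Htu]]].
    apply le_trans with (app (g u) (h u)); [| apply sup_ub; exists u; auto].
    apply le_trans with (app (g u) (h t)).
    + apply app_le, (scott_monotone Hg), Hsu.
    + apply (scott_monotone (app_scott (g u))), (scott_monotone Hh), Htu.
  - apply sup_least; intros y [s [Hs ->]].
    apply le_trans with (app (g (sup S)) (h s)).
    + apply app_le, (scott_monotone Hg), sup_ub, Hs.
    + apply (scott_monotone (app_scott _)), (scott_monotone Hh), sup_ub, Hs.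
Qed.

Lemma scott_lam (P : CLat) (F : P -> C M -> R M) :
  (forall p, scott (F p)) -> (forall k, scott (fun p => F p k)) ->
  scott (fun p => lam (F p)).
Proof.
  intros HFp HFk S HS.
  apply le_antisym; apply app_le; intros k; rewrite app_lam, app_sup, (HFk k S HS) by auto.
  - apply sup_least; intros y [s [Hs ->]].
    apply sup_ub; exists (lam (F s)); split; [exists s; auto | rewrite app_lam; auto].
  - apply sup_least; intros y [d [[s [Hs ->]] ->]]; rewrite app_lam by auto.
    apply sup_ub; exists s; auto.
Qed.

Lemma scott_app_pr (P : CLat) (h : P -> C M) :
  scott h -> scott (fun p => app (pr1 (h p)) (pr2 (h p))).
Proof.
  intros Hh; apply scott_app; apply scott_comp with (1 := Hh); [apply scott_pr1 | apply scott_pr2].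
Qed.

End ModelContinuity.

Lemma upd_eq (A : Type) (f : nat -> A) (x : nat) (v : A) : upd f x v x = v.
Proof. unfold upd; rewrite Nat.eqb_refl; reflexivity. Qed.

Lemma upd_neq (A : Type) (f : nat -> A) (x y : nat) (v : A) :
  y <> x -> upd f x v y = f y.
Proof. intros Hyx; unfold upd; apply Nat.eqb_neq in Hyx; rewrite Hyx; reflexivity. Qed.

Lemma scott_upd (P L : CLat) (f : P -> nat -> L) (x : nat) (v : P -> L) :
  (forall y, scott (fun p => f p y)) -> scott v ->
  forall y, scott (fun p => upd (f p) x (v p) y).
Proof. intros Hf Hv y; unfold upd; destruct (Nat.eqb y x); auto. Qed.

Definition scott_env (M : lm_model) (P : CLat) (E : P -> env M) : Prop :=
  (forall x, scott (fun p => fst (E p) x)) /\ (forall a, scott (fun p => snd (E p) a)).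

Section InterpContinuity.

Variable M : lm_model.

Lemma scott_env_const (P : CLat) (e : env M) : scott_env (fun _ : P => e).
Proof. split; intros; apply scott_const. Qed.

Lemma scott_env_upd_var (P : CLat) (E : P -> env M) (x : nat) (v : P -> D M) :
  scott_env E -> scott v -> scott_env (fun p => (upd (fst (E p)) x (v p), snd (E p))).
Proof. intros [HE1 HE2] Hv; split; cbn; [apply scott_upd |]; auto. Qed.

Lemma scott_env_upd_name (P : CLat) (E : P -> env M) (a : nat) (v : P -> C M) :
  scott_env E -> scott v -> scott_env (fun p => (fst (E p), upd (snd (E p)) a (v p))).
Proof. intros [HE1 HE2] Hv; split; cbn; [| apply scott_upd]; auto. Qed.

Scheme term_ind2 := Induction for term Sort Prop
  with cmd_ind2 := Induction for cmd Sort Prop.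
Combined Scheme term_cmd_ind from term_ind2, cmd_ind2.

Lemma scott_interp :
  (forall t (P : CLat) (E : P -> env M), scott_env E -> scott (fun p => iT t (E p))) /\
  (forall c (P : CLat) (E : P -> env M), scott_env E -> scott (fun p => iC c (E p))).
Proof.
  apply term_cmd_ind; cbn.
  - intros x P E HE; apply HE.
  - intros x u IH P E HE; apply scott_lam; [intros p | intros k]; apply scott_app.
    + apply IH, scott_env_upd_var; [apply scott_env_const | apply scott_pr1].
    + apply scott_pr2.
    + apply IH, scott_env_upd_var; [exact HE | apply scott_const].
    + apply scott_const.
  - intros u IHu v IHv P E HE; apply scott_lam; [intros p | intros k]; apply scott_app.
    + apply scott_const.
    + apply scott_pair; [apply scott_const | apply scott_id].
    + apply IHu, HE.
    + apply scott_pair; [apply IHv, HE | apply scott_const].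
  - intros a c IH P E HE; apply scott_lam; [intros p | intros k].
    + apply scott_app_pr, IH, scott_env_upd_name; [apply scott_env_const | apply scott_id].
    + apply scott_app_pr, IH, scott_env_upd_name; [exact HE | apply scott_const].
  - intros a u IH P E HE; apply scott_pair; [apply IH, HE | apply HE].
Qed.

Lemma app_iT_Lam (e : env M) (x : nat) (u : term) (c : C M) :
  app (iT (Lam x u) e) c = app (iT u (upd (fst e) x (pr1 c), snd e)) (pr2 c).
Proof.
  cbn; rewrite app_lam; [reflexivity |].
  apply scott_app; [| apply scott_pr2].
  apply scott_interp, scott_env_upd_var; [apply scott_env_const | apply scott_pr1].
Qed.

Lemma app_iT_App (e : env M) (u v : term) (k : C M) :
  app (iT (App u v) e) k = app (iT u e) (pair (iT v e) k).
Proof.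
  cbn; rewrite app_lam; [reflexivity |].
  apply scott_app; [apply scott_const |].
  apply scott_pair; [apply scott_const | apply scott_id].
Qed.

Lemma app_iT_Mu (e : env M) (a : nat) (c : cmd) (k : C M) :
  app (iT (Mu a c) e) k =
  app (pr1 (iC c (fst e, upd (snd e) a k))) (pr2 (iC c (fst e, upd (snd e) a k))).
Proof.
  cbn; rewrite app_lam; [reflexivity |].
  apply scott_app_pr, scott_interp, scott_env_upd_name; [apply scott_env_const | apply scott_id].
Qed.

End InterpContinuity.

Lemma interpRD_app (M : lm_model) (r : rtype (R M)) (d : D M) :
  interpRD r d <-> forall k, interpR r (app d k).
Proof.
  induction r as [a | | r1 IH1 r2 IH2]; cbn.
  - reflexivity.
  - tauto.
  - rewrite IH1, IH2; firstorder.
Qed.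

Lemma leR_sound (L : CLat) (r1 r2 : rtype L) :
  leR r1 r2 -> forall x, interpR r1 x -> interpR r2 x.
Proof.
  induction 1 as [| | | | | | a Ha | a Ha | a b c Hc | a b c Hc];
    cbn; intros y Hy; auto; try tauto.
  - rewrite Ha; apply sup_least; intros z [].
  - rewrite Hc in Hy; split; apply le_trans with (2 := Hy), sup_ub; auto.
  - rewrite Hc; apply sup_least; intros z [-> | ->]; tauto.
Qed.

Scheme leD_ind2 := Induction for leD Sort Prop
  with leC_ind2 := Induction for leC Sort Prop.
Combined Scheme leDC_ind from leD_ind2, leC_ind2.

Lemma leDC_sound (M : lm_model) :
  (forall s t : dtype (R M), leD s t -> forall d, interpD s d -> interpD t d) /\
  (forall s t : ctype (R M), leC s t -> forall c, interpC s c -> interpC t c).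
Proof.
  apply (@leDC_ind (R M) (fun s t _ => forall d, interpD s d -> interpD t d)
                         (fun s t _ => forall c, interpC s c -> interpC t c));
    cbn; intros; auto; try tauto.
  - rewrite interpRD_app in *; intros k; eapply leR_sound; eauto.
  - firstorder.
  - eapply leR_sound; eauto.
  - firstorder.
Qed.

Lemma upd_pointwise (A : Type) (Q : nat -> A -> Prop) (f : nat -> A) (x : nat) (v : A) :
  (forall y, y <> x -> Q y (f y)) -> Q x v -> forall y, Q y (upd f x v y).
Proof.
  intros Hf Hv y; destruct (Nat.eq_dec y x) as [-> | Hyx].
  - rewrite upd_eq; exact Hv.
  - rewrite upd_neq by exact Hyx; apply Hf, Hyx.
Qed.

Section Soundness.

Variable M : lm_model.

Lemma sat_upd_var (e : env M) (G : basis (R M)) (Dl : context (R M)) (x : nat) (d : D M) :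
  sat e (upd G x OmD) Dl -> interpD (G x) d -> sat (upd (fst e) x d, snd e) G Dl.
Proof.
  intros [HG HDl] Hd; split; [cbn | exact HDl].
  apply upd_pointwise with (Q := fun y d => interpD (G y) d); [| exact Hd].
  intros y Hyx; specialize (HG y); rewrite upd_neq in HG by exact Hyx; exact HG.
Qed.

Lemma sat_upd_name (e : env M) (G : basis (R M)) (Dl : context (R M)) (a : nat) (k : C M) :
  sat e G (upd Dl a OmC) -> interpC (Dl a) k -> sat (fst e, upd (snd e) a k) G Dl.
Proof.
  intros [HG HDl] Hk; split; [exact HG | cbn].
  apply upd_pointwise with (Q := fun b k => interpC (Dl b) k); [| exact Hk].
  intros b Hba; specialize (HDl b); rewrite upd_neq in HDl by exact Hba; exact HDl.
Qed.

Scheme typT_ind2 := Induction for typT Sort Prop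
  with typC_ind2 := Induction for typC Sort Prop.
Combined Scheme typTC_ind from typT_ind2, typC_ind2.

Lemma typing_sound :
  (forall (G : basis (R M)) t s Dl, typT G t s Dl -> modelsT G t s Dl) /\
  (forall (G : basis (R M)) c k Dl, typC G c k Dl -> modelsC G c k Dl).
Proof.
  apply (@typTC_ind (R M) (fun G t s Dl _ => modelsT G t s Dl)
                          (fun G c k Dl _ => modelsC G c k Dl));
    unfold modelsT, modelsC.
  - intros G Dl x e Hs; apply Hs.
  - intros G Dl x u k r _ IH e Hs c [Hx Hk].
    rewrite app_iT_Lam; exact (IH _ (sat_upd_var Hs Hx) _ Hk).
  - intros G Dl u v d k r _ IHu _ IHv e Hs c Hc.
    rewrite app_iT_App; apply (IHu e Hs); cbn.
    rewrite pr1_pair, pr2_pair; split; [apply IHv, Hs | exact Hc].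
  - intros G Dl a c k' r _ IH e Hs k Hk.
    destruct (IH _ (sat_upd_name Hs Hk)) as [Hfun Harg].
    rewrite app_iT_Mu; exact (Hfun _ Harg).
  - intros; split; auto.
  - intros; exact I.
  - intros G Dl u s t _ IH Hst e Hs; apply (proj1 (leDC_sound M) s t Hst), IH, Hs.
  - intros G Dl a u d _ IH e Hs; cbn; rewrite pr1_pair, pr2_pair; split; [apply IH |]; apply Hs.
  - intros; split; auto.
  - intros; exact I.
  - intros G Dl c s t _ IH Hst e Hs; apply (proj2 (leDC_sound M) s t Hst), IH, Hs.
Qed.

End Soundness.

Theorem theorem4p16 (M : lm_model) :
  (forall (G : basis (R M)) (Dl : context (R M)) (t : term) (s : dtype (R M)),
      finite_basis G -> finite_context Dl ->
      typT G t s Dl -> modelsT G t s Dl) /\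
  (forall (G : basis (R M)) (Dl : context (R M)) (c : cmd) (k : ctype (R M)),
      finite_basis G -> finite_context Dl ->
      typC G c k Dl -> modelsC G c k Dl).
Proof.
  (* Soundness holds for arbitrary bases and contexts. *)
  destruct (typing_sound M) as [HT HC]; split; intros; auto.
Qed.
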